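(* Let $d\ge2$ and $\overrightarrow{w}\in(0,\infty)^d$. There exists a $\overrightarrow{w}$-CM random vector $\overrightarrow{U}=(U_1,\dots,U_d)$ with uniform$[0,1]$ marginals (equivalently, a $\overrightarrow{w}$-CM $d$-dimensional copula) if and only if $$\max\{w_1,\dots,w_d\}\le\sum_{i=1}^dw_i-\max\{w_1,\dots,w_d\}.$$
   Context: A random vector $\overrightarrow{U}=(U_1,\dots,U_d)$ with each $U_i$ uniform on $[0,1]$ is $\overrightarrow{w}$-CM if $P\left(\sum_{i=1}^d w_iU_i=\frac12\sum_{i=1}^d w_i\right)=1$; its distribution function (a copula) is then called $\overrightarrow{w}$-CM. *)

From HB Require Import structures.
From mathcomp Require Import all_boot all_order all_algebra.
From mathcomp Require Import all_classical all_reals all_analysis.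
Set Implicit Arguments. Unset Strict Implicit. Unset Printing Implicit Defensive.
Import Order.TTheory GRing.Theory Num.Theory.
Local Open Scope classical_set_scope.
Local Open Scope ring_scope.

Definition is_uniform01 (R : realType) d (T : measurableType d)
    (P : probability T R) (X : {RV P >-> R}) : Prop :=
  forall A : set R, measurable A ->
    distribution P X A = uniform_prob (@ltr01 R) A.

Definition is_wCM (R : realType) d (T : measurableType d)
    (P : probability T R) (n : nat) (w : 'I_n -> R)
    (U : 'I_n -> {RV P >-> R}) : Prop :=
  P [set x | \sum_(i < n) w i * U i x = 2^-1 * \sum_(i < n) w i] = 1%E.

From HB Require Import structures.
From mathcomp Require Import all_boot all_order all_algebra.
From mathcomp Require Import all_classical all_reals all_analysis.
From mathcomp Require Import measurable_realfun.
From mathcomp Require Import ring lra.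
Set Implicit Arguments. Unset Strict Implicit. Unset Printing Implicit Defensive.
Import Order.TTheory GRing.Theory Num.Theory.
Local Open Scope classical_set_scope.
Local Open Scope ring_scope.

(* Necessity: uniform variables are almost surely nonnegative, so on the almost sure
   event [sum_i w_i U_i = s / 2] (s the total weight) we get w_m U_m <= s / 2, i.e.
   U_m <= s / (2 w_m); as U_m is uniform on [0, 1], this forces s / (2 w_m) >= 1.
   Sufficiency: split the indices into an initial block of total weight a <= s / 2,
   the next index, of weight b, and the remaining block, of weight c.  Then a, b, c
   satisfy the triangle inequalities, and giving a common uniform variable to all the
   indices of a block reduces the problem to three uniform variables X0, X1, X2 with
   a X0 + b X1 + c X2 constant.  They are functions of one uniform u on [0, 1): each is
   a tent map after a rotation of [0, 1), hence again uniform, and the breakpoints are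
   placed so that on each of the three pieces of [0, 1) where all three are affine the
   weighted slopes cancel. *)

Section rot_tent.
Variable R : realFieldType.
Implicit Types (c p u x : R).

Definition rot c x : R := if x + c < 1 then x + c else x + c - 1.
Definition tent p x : R := if x < p then 1 - x / p else (x - p) / (1 - p).

Lemma rot_lt c x : x + c < 1 -> rot c x = x + c.
Proof. by rewrite /rot => ->. Qed.

Lemma rot_ge c x : 1 <= x + c -> rot c x = x + c - 1.
Proof. by rewrite /rot leNgt => /negbTE ->. Qed.

Lemma tent_lt p x : x < p -> tent p x = 1 - x / p.
Proof. by rewrite /tent => ->. Qed.

Lemma tent_ge p x : p <= x -> tent p x = (x - p) / (1 - p).
Proof. by rewrite /tent leNgt => /negbTE ->. Qed.

Variables al be ga : R.
Hypotheses (al_ge0 : 0 <= al) (be_ge0 : 0 <= be) (ga_ge0 : 0 <= ga).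

(* In the use below al = b + c - a, be = a + c - b, ga = a + b - c.  The breakpoints
   mix_t1 and mix_t1 + mix_t2 cut [0, 1) into pieces of lengths proportional to
   al ga, al be and be ga; on each piece mix0, mix1, mix2 are affine, and these lengths
   are the ones for which the weighted slopes cancel. *)
Definition mix_norm := al * be + be * ga + ga * al.
Definition mix_t1 := al * ga / mix_norm.
Definition mix_t2 := al * be / mix_norm.

Lemma mix_norm_ge0 : 0 <= mix_norm.
Proof. by rewrite /mix_norm !addr_ge0 ?mulr_ge0. Qed.

Lemma mix_t_ge0 : 0 <= mix_t1 /\ 0 <= mix_t2.
Proof. by split; apply: divr_ge0; rewrite ?mix_norm_ge0 ?mulr_ge0. Qed.

Lemma mix_t12_le1 : mix_t1 + mix_t2 <= 1.
Proof.
have [N0|N0] := eqVneq mix_norm 0.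
  by rewrite /mix_t1 /mix_t2 N0 invr0 !mulr0 addr0.
have N_gt0 : 0 < mix_norm by rewrite lt_def N0 mix_norm_ge0.
rewrite /mix_t1 /mix_t2 -mulrDl ler_pdivrMr // mul1r /mix_norm.
have := mulr_ge0 be_ge0 ga_ge0; lra.
Qed.

Definition mix0 u := tent (mix_t1 + mix_t2) (rot 0 u).
Definition mix1 u := tent (1 - mix_t1) (rot (1 - mix_t1) u).
Definition mix2 u := tent (1 - mix_t2) (rot (1 - mix_t1 - mix_t2) u).

Hypothesis bega_gt0 : 0 < be + ga.

Lemma mix_norm_eq0 : mix_norm = 0 -> al = 0.
Proof.
move=> N0; have : al * (be + ga) = 0.
  have := mulr_ge0 al_ge0 be_ge0; have := mulr_ge0 be_ge0 ga_ge0.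
  by have := mulr_ge0 ga_ge0 al_ge0; move: N0; rewrite /mix_norm; lra.
by move/eqP; rewrite mulf_eq0 (gt_eqF bega_gt0) orbF => /eqP.
Qed.

Lemma mix_sum_const_nondegenerate u : 0 < mix_norm -> 0 <= u < 1 ->
  (be + ga) * mix0 u + (al + ga) * mix1 u + (al + be) * mix2 u = al + be + ga.
Proof.
move=> N_gt0 /andP[u0 u1]; rewrite /mix0 /mix1 /mix2 (@rot_lt 0) ?addr0 //.
have [t1_ge0 t2_ge0] := mix_t_ge0; have t12_le1 := mix_t12_le1.
have ab_ge0 := mulr_ge0 al_ge0 be_ge0; have bg_ge0 := mulr_ge0 be_ge0 ga_ge0.
have ga_al_ge0 := mulr_ge0 ga_ge0 al_ge0.
have N_gt0' : 0 < al * be + be * ga + ga * al := N_gt0.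
have div_norm_gt0 x : 0 < x / mix_norm -> 0 < x by rewrite pmulr_lgt0 ?invr_gt0.
have t3E : 1 - mix_t1 - mix_t2 = be * ga / mix_norm.
  by rewrite /mix_t1 /mix_t2 /mix_norm; field; rewrite gt_eqF.
have [ut1|t1u] := ltrP u mix_t1.
  have ag_gt0 : 0 < al * ga by apply: div_norm_gt0; rewrite -/mix_t1; lra.
  have /andP[al_gt0 ga_gt0] : (0 < al) && (0 < ga) by rewrite -mulr_ge0_gt0.
  rewrite (@tent_lt (mix_t1 + mix_t2)) ?(@rot_lt (1 - mix_t1)) ?(@tent_ge (1 - mix_t1))
    ?(@rot_lt (1 - mix_t1 - mix_t2)) ?(@tent_lt (1 - mix_t2)); try lra.
  rewrite /mix_t1 /mix_t2 /mix_norm; field.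
  by repeat (apply/andP; split); apply: lt0r_neq0; lra.
have [ut2|t2u] := ltrP u (mix_t1 + mix_t2).
  have ab_gt0 : 0 < al * be by apply: div_norm_gt0; rewrite -/mix_t2; lra.
  have /andP[al_gt0 be_gt0] : (0 < al) && (0 < be) by rewrite -mulr_ge0_gt0.
  rewrite (@tent_lt (mix_t1 + mix_t2)) ?(@rot_ge (1 - mix_t1)) ?(@tent_lt (1 - mix_t1))
    ?(@rot_lt (1 - mix_t1 - mix_t2)) ?(@tent_ge (1 - mix_t2)); try lra.
  rewrite /mix_t1 /mix_t2 /mix_norm; field.
  by repeat (apply/andP; split); apply: lt0r_neq0; lra.
have bg_gt0 : 0 < be * ga by apply: div_norm_gt0; rewrite -t3E; lra.
have /andP[be_gt0 ga_gt0] : (0 < be) && (0 < ga) by rewrite -mulr_ge0_gt0.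
rewrite (@tent_ge (mix_t1 + mix_t2)) ?(@rot_ge (1 - mix_t1)) ?(@tent_lt (1 - mix_t1))
  ?(@rot_ge (1 - mix_t1 - mix_t2)) ?(@tent_lt (1 - mix_t2)); try lra.
rewrite /mix_t1 /mix_t2 /mix_norm; field.
by repeat (apply/andP; split); apply: lt0r_neq0; lra.
Qed.

Lemma mix_sum_const u : 0 <= u < 1 ->
  (be + ga) * mix0 u + (al + ga) * mix1 u + (al + be) * mix2 u = al + be + ga.
Proof.
have [N0 /andP[u0 u1]|N_neq0] := eqVneq mix_norm 0; last first.
  by apply: mix_sum_const_nondegenerate; rewrite lt_def N_neq0 mix_norm_ge0.
(* Then al = 0 and, as x / 0 = 0, mix0 u = u and mix1 u = mix2 u = 1 - u. *)
rewrite /mix0 /mix1 /mix2 /mix_t1 /mix_t2 N0 invr0 !mulr0 !subr0 addr0.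
rewrite (@rot_lt 0) ?(@rot_ge 1) ?addr0 ?addrK; try lra.
by rewrite tent_ge // tent_lt // !subr0 !divr1 (mix_norm_eq0 N0); lra.
Qed.

End rot_tent.

Section lebesgue_unit_interval.
Variable R : realType.
Local Notation mu := (@lebesgue_measure R).
Local Notation unif := (uniform_prob (@ltr01 R)).
Implicit Types (A B : set R) (a b c p x : R).

Definition aff a b x : R := a * x + b.

Lemma measurable_aff a b : measurable_fun setT (aff a b).
Proof. by apply: measurable_funD => //; apply: measurable_funM. Qed.

Lemma measurable_aff_preimage a b B : measurable B -> measurable (aff a b @^-1` B).
Proof. by move=> mB; rewrite -[X in measurable X]setTI; exact: measurable_aff. Qed.

Lemma lebesgue_measure_aff_preimage a b B : a != 0 -> measurable B ->
  mu (aff a b @^-1` B) = ((`|a|^-1)%:E * mu B)%E.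
Proof.
move=> a0 mB.
(* Lebesgue measure is a measure on [measurableTypeR R], hence the cast. *)
pose aff_pushforward := measure_function_pushforward__canonical__measure_function_Measure mu
  (f := aff a b : measurableTypeR R -> measurableTypeR R) (measurable_aff a b).
suff /(@lebesgue_measure_unique R (mscale (NngNum (normr_ge0 a)) aff_pushforward))/(_ B mB) -> :
    forall X, ocitv X -> mu X = mscale (NngNum (normr_ge0 a)) aff_pushforward X.
  by rewrite /mscale muleA -EFinM mulVf ?mul1e ?normr_eq0.
move=> _ /ocitvP[->|[[x1 x2] /= x12 ->]]; first by rewrite !measure0.
rewrite /mscale /= /pushforward lebesgue_measure_itv /= lte_fin x12.
have [a_gt0|a_le0] := ltrP 0 a.
  have -> : aff a b @^-1` `]x1, x2] = `](x1 - b) / a, (x2 - b) / a]%classic.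
    apply/seteqP; split => x /=; rewrite /aff !in_itv /= ltr_pdivrMr // ler_pdivlMr //;
      by move=> /andP[h1 h2]; apply/andP; split; lra.
  rewrite lebesgue_measure_itv /= lte_fin ltr_pM2r ?invr_gt0 // ltrD2r x12.
  by rewrite -EFinD -EFinM gtr0_norm //; congr EFin; field; rewrite gt_eqF.
have a_lt0 : a < 0 by rewrite lt_neqAle a0.
have -> : aff a b @^-1` `]x1, x2] = `[(x2 - b) / a, (x1 - b) / a[%classic.
  apply/seteqP; split => x /=; rewrite /aff !in_itv /= ler_ndivrMr // ltr_ndivlMr //;
    by move=> /andP[h1 h2]; apply/andP; split; lra.
rewrite lebesgue_measure_itv /= lte_fin ltr_nM2r ?invr_lt0 // ltrD2r x12.
by rewrite -EFinD -EFinM ltr0_norm //; congr EFin; field; rewrite lt_eqF.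
Qed.

Lemma lebesgue_measure_aff_setU a1 b1 B1 a2 b2 B2 : a1 != 0 -> a2 != 0 ->
  measurable B1 -> measurable B2 ->
  aff a1 b1 @^-1` B1 `&` aff a2 b2 @^-1` B2 = set0 ->
  mu (aff a1 b1 @^-1` B1 `|` aff a2 b2 @^-1` B2) =
    ((`|a1|^-1)%:E * mu B1 + (`|a2|^-1)%:E * mu B2)%E.
Proof.
move=> a1_neq0 a2_neq0 mB1 mB2 disj.
rewrite -(lebesgue_measure_aff_preimage b1) // -(lebesgue_measure_aff_preimage b2) //.
have mB1' := measurable_aff_preimage a1 b1 mB1.
by have := measureU mu mB1' (measurable_aff_preimage a2 b2 mB2); move/(_ disj).
Qed.

Lemma lebesgue_measureIU1 A B x : measurable A -> measurable B ->
  mu (A `&` (B `|` [set x])) = mu (A `&` B).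
Proof.
move=> mA mB; rewrite setIUr.
have mAx : measurable (A `&` [set x]) by exact: measurableI.
have Ax0 : mu (A `&` [set x]) = 0%E.
  exact: (subset_measure0 (mu := mu)) mAx (measurable_set1 x) (@subIsetr _ A _)
    (lebesgue_measure_set1 x).
exact: (measureU0 (mu := mu)) (measurableI _ _ mA mB) mAx Ax0.
Qed.

Lemma uniform01E A : measurable A -> unif A = mu (A `&` `[0, 1[).
Proof.
move=> mA; rewrite /uniform_prob integral_uniform_pdf.
rewrite (eq_integral (fun=> 1%:E)); last first.
  move=> x; rewrite inE /= => -[_]; rewrite in_itv /= /uniform_pdf => ->.
  by rewrite subr0 invr1.
rewrite integral_cst /= ?mul1e; last exact: measurableI.
rewrite -(@setUitv1 _ _ _ _ true) ?bnd_simp //.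
exact: lebesgue_measureIU1 1 mA (measurable_itv `[0, 1[).
Qed.

Lemma lebesgue_measureI_oc_co01 A : measurable A ->
  mu (A `&` `]0, 1]) = mu (A `&` `[0, 1[).
Proof.
move=> mA; rewrite -(lebesgue_measureIU1 0 mA (measurable_itv `]0, 1])).
rewrite -(lebesgue_measureIU1 1 mA (measurable_itv `[0, 1[)) setUC.
by rewrite setU1itv ?bnd_simp // -(@setUitv1 _ _ _ _ true) ?bnd_simp.
Qed.

Definition unit_interval_preserving (f : R -> R) :=
  forall A, measurable A -> mu (f @^-1` A `&` `[0, 1[) = mu (A `&` `[0, 1[).

Lemma measurable_rot c : measurable_fun setT (rot c).
Proof.
apply: measurable_fun_ifT.
- by apply: measurable_fun_ltr => //; apply: measurable_funD.
- by apply: measurable_funD.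
- by apply: measurable_funB => //; apply: measurable_funD.
Qed.

Lemma measurable_tent p : measurable_fun setT (tent p).
Proof.
apply: measurable_fun_ifT.
- by apply: measurable_fun_ltr.
- by apply: measurable_funB => //; apply: measurable_funM.
- by apply: measurable_funM => //; apply: measurable_funB.
Qed.

Lemma rot_preserving c : 0 <= c <= 1 -> unit_interval_preserving (rot c).
Proof.
move=> /andP[c0 c1] A mA.
have -> : rot c @^-1` A `&` `[0, 1[ =
    aff 1 c @^-1` (A `&` `[c, 1[) `|` aff 1 (c - 1) @^-1` (A `&` `[0, c[).
  apply/seteqP; split => x /=; rewrite /rot /aff !in_itv /= !mul1r.
    case: ifPn => xc [xA /andP[x0 x1]].
      by left; split => //; apply/andP; split => //; lra.
    by right; rewrite addrA; split => //; apply/andP; split; lra.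
  case=> -[xA /andP[h1 h2]].
    by rewrite h2; split => //; apply/andP; split => //; lra.
  rewrite addrA in xA h1 h2 *; rewrite ifN; last by rewrite -leNgt; lra.
  by split => //; apply/andP; split; lra.
rewrite lebesgue_measure_aff_setU ?oner_eq0 //; try exact: measurableI; last first.
  apply/seteqP; split => x //=; rewrite /aff !in_itv /= !mul1r.
  by case=> -[_ /andP[h1 h2]] [_ /andP[h3 h4]]; lra.
rewrite normr1 invr1 !mul1e addeC.
rewrite -(measureU mu); try exact: measurableI.
  by rewrite -setIUr -itv_bndbnd_setU ?bnd_simp.
apply/seteqP; split => x //=; rewrite !in_itv /=.
by case=> -[_ /andP[_ ?]] [_ /andP[? _]]; lra.
Qed.

Lemma tent_preserving_interior p : 0 < p < 1 -> unit_interval_preserving (tent p).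
Proof.
move=> /andP[p_gt0 p_lt1] A mA.
have q_gt0 : 0 < 1 - p by rewrite subr_gt0.
pose a1 := - p^-1; pose a2 := (1 - p)^-1; pose b2 := - (p / (1 - p)).
have tent_lt_aff x : 1 - x / p = aff a1 1 x by rewrite /aff /a1 mulNr addrC mulrC.
have tent_ge_aff x : (x - p) / (1 - p) = aff a2 b2 x.
  by rewrite /aff /a2 /b2 mulrBl mulrC -mulNr.
have lt_p x : (0 <= x < p) = (0 < aff a1 1 x <= 1).
  rewrite -tent_lt_aff subr_gt0 ltr_pdivrMr // mul1r lerBlDr lerDl.
  by rewrite pmulr_lge0 ?invr_gt0 // andbC.
have ge_p x : (p <= x < 1) = (0 <= aff a2 b2 x < 1).
  rewrite -tent_ge_aff pmulr_lge0 ?invr_gt0 // subr_ge0 ltr_pdivrMr // mul1r.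
  by rewrite ltrD2r.
have -> : tent p @^-1` A `&` `[0, 1[ =
    aff a1 1 @^-1` (A `&` `]0, 1]) `|` aff a2 b2 @^-1` (A `&` `[0, 1[).
  apply/seteqP; split => x /=; rewrite /tent !in_itv /=.
    case: ifPn => xp [xA /andP[x0 x1]].
      by left; split; [rewrite -tent_lt_aff | rewrite /= ?in_itv /= -lt_p x0 xp].
    by right; split; [rewrite -tent_ge_aff | rewrite /= ?in_itv /= -ge_p leNgt xp x1].
  case=> -[xA]; rewrite /= ?in_itv /=.
    by rewrite -lt_p => /andP[x0 xp]; rewrite xp tent_lt_aff x0; split => //; lra.
  by rewrite -ge_p => /andP[px x1]; rewrite ltNge px tent_ge_aff x1; split => //; lra.
rewrite lebesgue_measure_aff_setU ?oppr_eq0 ?invr_eq0 ?gt_eqF //; try exact: measurableI;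
  last first.
  apply/seteqP; split => x //=; rewrite !in_itv /= -lt_p -(ge_p x).
  by case=> -[_ /andP[_ ?]] [_ /andP[? _]]; lra.
rewrite normrN !gtr0_norm ?invr_gt0 // !invrK lebesgue_measureI_oc_co01 //.
by rewrite -ge0_muleDl ?lee_fin ?ltW // -EFinD addrC subrK mul1e.
Qed.

Lemma tent_preserving p : 0 <= p <= 1 -> unit_interval_preserving (tent p).
Proof.
move=> /andP[p0 p1] A mA.
have [->|p_neq0] := eqVneq p 0.
  have tent0 (x : R) : 0 <= x -> tent 0 x = x.
    by move=> x0; rewrite tent_ge // !subr0 divr1.
  congr (mu _); apply/seteqP; split => x [Ax]; rewrite /= in_itv /= => /andP[x0 x1].
    by split; [rewrite -(tent0 x x0) | rewrite /= ?in_itv /= x0 x1].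
  by split; [rewrite /= (tent0 x x0) | rewrite /= ?in_itv /= x0 x1].
have {p0 p_neq0} p_gt0 : 0 < p by rewrite lt_def p_neq0.
have [->|p_neq1] := eqVneq p 1.
  have -> : tent 1 @^-1` A `&` `[0, 1[ = aff (-1) 1 @^-1` (A `&` `]0, 1]).
    apply/seteqP; split => x /=; rewrite /tent /aff !in_itv /= divr1 mulN1r addrC.
      by case=> + /andP[x0 x1]; rewrite x1 => xA; split => //; apply/andP; split; lra.
    case=> xA /andP[h1 h2]; rewrite ifT; last by lra.
    by split => //; apply/andP; split; lra.
  rewrite lebesgue_measure_aff_preimage ?oppr_eq0 ?oner_eq0 //; last exact: measurableI.
  by rewrite normrN normr1 invr1 mul1e lebesgue_measureI_oc_co01.
by apply: tent_preserving_interior mA; rewrite p_gt0 lt_neqAle p_neq1.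
Qed.

Lemma unit_interval_preserving_comp (f g : R -> R) : measurable_fun setT g ->
  unit_interval_preserving f -> unit_interval_preserving g ->
  unit_interval_preserving (g \o f).
Proof.
move=> mg f_pres g_pres A mA; rewrite comp_preimage f_pres ?g_pres //.
by rewrite -[X in measurable X]setTI; exact: mg.
Qed.

Lemma measurable_tent_rot p c :
  measurable_fun (setT : set (measurableTypeR R)) (tent p \o rot c).
Proof. exact: measurableT_comp (measurable_tent p) (measurable_rot c). Qed.

Definition tent_rot p c : {RV unif >-> R} :=
  HB.pack (tent p \o rot c) (isMeasurableFun.Build _ _ _ _ _ (measurable_tent_rot p c)).

Lemma uniform01_preimage (f : R -> R) A : measurable_fun setT f ->
  unit_interval_preserving f -> measurable A -> unif (f @^-1` A) = unif A.
Proof.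
move=> mf f_pres mA; rewrite !uniform01E ?f_pres //.
by rewrite -[X in measurable X]setTI; exact: mf.
Qed.

Lemma tent_rot_uniform p c : 0 <= p <= 1 -> 0 <= c <= 1 -> is_uniform01 (tent_rot p c).
Proof.
move=> p01 c01 A mA; apply: uniform01_preimage => //.
- exact: measurable_tent_rot.
- by apply: unit_interval_preserving_comp;
    [exact: measurable_tent | exact: rot_preserving | exact: tent_preserving].
Qed.

Lemma uniform01_supset A : measurable A -> `[0, 1[ `<=` A -> unif A = 1%E.
Proof.
move=> mA A01; rewrite uniform01E // setIidr // lebesgue_measure_itv /=.
by rewrite lte_fin ltr01 -EFinD subr0.
Qed.

End lebesgue_unit_interval.

Lemma uniform_triangle_mix (R : realType) (a b c : R) :
  0 < a -> a <= b + c -> b <= a + c -> c <= a + b ->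
  exists X0 X1 X2 : {RV uniform_prob (@ltr01 R) >-> R},
    [/\ is_uniform01 X0, is_uniform01 X1, is_uniform01 X2 &
      forall x, 0 <= x < 1 -> a * X0 x + b * X1 x + c * X2 x = 2^-1 * (a + b + c)].
Proof.
move=> a_gt0 a_le b_le c_le.
pose al := b + c - a; pose be := a + c - b; pose ga := a + b - c.
have al_ge0 : 0 <= al by rewrite subr_ge0.
have be_ge0 : 0 <= be by rewrite subr_ge0.
have ga_ge0 : 0 <= ga by rewrite subr_ge0.
have [t1_ge0 t2_ge0] := mix_t_ge0 al_ge0 be_ge0 ga_ge0.
have t12_le1 := mix_t12_le1 al_ge0 be_ge0 ga_ge0.
set t1 := mix_t1 al be ga in t1_ge0 t12_le1; set t2 := mix_t2 al be ga in t2_ge0 t12_le1.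
exists (tent_rot (t1 + t2) 0), (tent_rot (1 - t1) (1 - t1)),
  (tent_rot (1 - t2) (1 - t1 - t2)).
split; try by apply: tent_rot_uniform; apply/andP; split; lra.
have bega_gt0 : 0 < be + ga by rewrite /be /ga; lra.
move=> x x01; have := mix_sum_const al_ge0 be_ge0 ga_ge0 bega_gt0 x01.
rewrite /mix0 /mix1 /mix2 -/t1 -/t2 /= /al /be /ga; lra.
Qed.

Section uniform01_random_variable.
Context (R : realType) d (T : measurableType d) (P : probability T R).
Variable X : {RV P >-> R}.
Hypothesis X_unif : is_uniform01 X.

Lemma uniform01_negligible_lt0 : P.-negligible (X @^-1` `]-oo, 0[).
Proof.
apply/negligibleP; first exact: measurable_funPTI.
apply: eq_trans (X_unif (measurable_itv `]-oo, 0[)) _.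
rewrite uniform01E; last exact: measurable_itv.
rewrite (_ : _ `&` _ = set0) ?measure0 //; apply/seteqP; split => x //=.
by rewrite !in_itv /= => -[x0 /andP[x0' _]]; lra.
Qed.

Lemma uniform01_gt t : 0 <= t < 1 -> P (X @^-1` `]t, +oo[) = (1 - t)%:E.
Proof.
move=> /andP[t0 t1].
apply: eq_trans (X_unif (measurable_itv `]t, +oo[)) _.
rewrite uniform01E; last exact: measurable_itv.
rewrite (_ : _ `&` _ = `]t, 1[%classic) ?lebesgue_measure_itv /= ?lte_fin ?t1 //.
apply/seteqP; split => x /=; rewrite !in_itv /= ?andbT.
  by case=> tx /andP[_ ->]; rewrite tx.
by move=> /andP[tx ->]; split => //; apply/andP; split => //; lra.
Qed.

End uniform01_random_variable.

Lemma measurable_weighted_sum_eq (R : realType) n (w : 'I_n -> R)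
    d (T : measurableType d) (U : 'I_n -> {mfun T >-> R}) (y : R) :
  measurable [set x | \sum_(i < n) w i * U i x = y].
Proof.
have msum : measurable_fun setT (fun x => \sum_(i < n) w i * U i x).
  by apply: measurable_sum => i; exact: measurable_funM.
by rewrite -[X in measurable X]setTI; exact: msum measurableT _ (measurable_set1 _).
Qed.

Lemma wCM_weight_le_half (R : realType) n (w : 'I_n -> R) (w_ge0 : forall i, 0 <= w i)
    d (T : measurableType d) (P : probability T R) (U : 'I_n -> {RV P >-> R}) :
  (forall i, is_uniform01 (U i)) -> is_wCM w U -> forall m, 2 * w m <= \sum_(i < n) w i.
Proof.
move=> U_unif wCM m; rewrite /is_wCM in wCM; rewrite leNgt; apply/negP => m_big.
set s := \sum_(i < n) w i in wCM m_big.
have s_ge0 : 0 <= s by exact: sumr_ge0.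
have wm_gt0 : 0 < w m by lra.
pose t := s / (2 * w m).
have t01 : 0 <= t < 1.
  apply/andP; split; first by rewrite /t divr_ge0 // mulr_ge0.
  by rewrite /t ltr_pdivrMr ?mul1r // mulr_gt0.
set E := [set x | _] in wCM.
have mE : measurable E := measurable_weighted_sum_eq w U _.
have nullE : P.-negligible (~` E).
  apply/negligibleP; first exact: measurableC.
  by have := probability_setC P mE; rewrite wCM subee.
pose Neg := \big[setU/set0]_(j < n) (U j @^-1` `]-oo, 0[).
have nullNeg : P.-negligible Neg.
  elim/big_ind : Neg => //; [exact: negligible_set0 | exact: negligibleU |].
  by move=> j _; exact: uniform01_negligible_lt0.
have Um_le x : E x -> (forall j, 0 <= U j x) -> U m x <= t.
  rewrite /E /= (bigD1 m) //= => Ex U_ge0.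
  have : 0 <= \sum_(i < n | i != m) w i * U i x by apply: sumr_ge0 => i _; exact: mulr_ge0.
  by rewrite /t ler_pdivlMr ?mulr_gt0 //; lra.
have : P (U m @^-1` `]t, +oo[) = 0%E.
  apply: measure_negligible; first exact: measurable_funPTI.
  apply: negligibleS (negligibleU nullE nullNeg) => x /=; rewrite in_itv /= andbT => tU.
  have [Ex|] := pselect (E x); last by left.
  right; have [[j Uj]|] := pselect (exists j, U j x < 0).
    by rewrite /Neg (bigD1 j) //=; left; rewrite /= in_itv.
  move=> noNeg; suff : U m x <= t by lra.
  by apply: Um_le => // j; rewrite leNgt; apply/negP => Uj; apply: noNeg; exists j.
rewrite (uniform01_gt (U_unif m) t01) => /eqP; rewrite eqe subr_eq0 eq_sym.
by case/andP: t01 => _ /lt_eqF ->.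
Qed.

Lemma exists_half_crossing (R : realFieldType) n (w : 'I_n -> R) :
  0 < \sum_(i < n) w i ->
  exists k : 'I_n, \sum_(i < n | (i < k)%N) w i <= (\sum_(i < n) w i) / 2 <
                   \sum_(i < n | (i < k)%N) w i + w k.
Proof.
set s := \sum_(i < n) w i => s_gt0.
pose below j := (j <= n)%N && (\sum_(i < n | (i < j)%N) w i <= s / 2).
have below0 : exists j, below j.
  by exists 0%N; rewrite /below leq0n big_pred0 // divr_ge0 // ltW.
have below_n j : below j -> (j <= n)%N by case/andP.
have [k /andP[kn k_below] k_max] := ex_maxnP below0 below_n.
have k_lt_n : (k < n)%N.
  rewrite ltn_neqAle kn andbT; apply/eqP => kE; move: k_below.
  rewrite kE (eq_bigl xpredT) => [|i]; last by rewrite ltn_ord.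
  by rewrite -/s; lra.
exists (Ordinal k_lt_n); rewrite k_below /= ltNge.
have : ~~ below k.+1 by apply/negP => /k_max; rewrite ltnn.
rewrite /below k_lt_n (bigD1 (Ordinal k_lt_n)) ?ltnSn //= addrC.
by rewrite (eq_bigl (fun i : 'I_n => (i < k)%N)) // => i; rewrite ltnS ltn_neqAle andbC.
Qed.

Lemma wCM_exists (R : realType) n (w : 'I_n -> R) : (0 < n)%N ->
  (forall i, 0 < w i) -> (forall i, 2 * w i <= \sum_(i < n) w i) ->
  exists (d : measure_display) (T : measurableType d) (P : probability T R)
     (U : 'I_n -> {RV P >-> R}), (forall i, is_uniform01 (U i)) /\ is_wCM w U.
Proof.
move=> n_gt0 w_gt0 w_le; set s := \sum_(i < n) w i in w_le *.
pose i0 : 'I_n := Ordinal n_gt0.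
have s_gt0 : 0 < s.
  rewrite /s (bigD1 i0) //= ltr_pwDl ?w_gt0 //; apply: sumr_ge0 => i _; exact: ltW.
have [k /andP[a_le a_gt]] := exists_half_crossing s_gt0; rewrite -/s in a_le a_gt.
set a := \sum_(i < n | (i < k)%N) w i in a_le a_gt.
pose c := \sum_(i < n | ~~ (i < k)%N && (i != k)) w i.
have s_abc : s = a + w k + c.
  by rewrite /s (bigID (fun i : 'I_n => (i < k)%N)) /= [X in _ + X](bigD1 k) /= ?ltnn ?addrA.
have a_gt0 : 0 < a.
  have k_gt0 : (0 < k)%N.
    rewrite lt0n; apply/eqP => k0; move: a_gt (w_le k).
    by rewrite /a k0 big_pred0 //; lra.
  rewrite /a (bigD1 i0) //= ltr_pwDl ?w_gt0 //; apply: sumr_ge0 => i _; exact: ltW.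
have c_ge0 : 0 <= c by apply: sumr_ge0 => i _; exact: ltW.
have [X0 [X1 [X2 [X0_unif X1_unif X2_unif X_mix]]]] :=
  @uniform_triangle_mix R a (w k) c a_gt0 ltac:(lra) ltac:(have := w_le k; lra) ltac:(lra).
pose U (i : 'I_n) := if (i < k)%N then X0 else if i == k then X1 else X2.
exists _, _, (uniform_prob (@ltr01 R)), U; split.
  by move=> i; rewrite /U; case: ifP => _; last case: ifP.
apply: uniform01_supset; first exact: measurable_weighted_sum_eq.
move=> x; rewrite /= in_itv /= => x01.
rewrite (bigID (fun i : 'I_n => (i < k)%N)) /= [X in _ + X](bigD1 k) /= ?ltnn //.
have -> : \sum_(i < n | (i < k)%N) w i * U i x = a * X0 x.
  by rewrite /a mulr_suml; apply: eq_bigr => i ik; rewrite /U ik.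
have -> : \sum_(i < n | ~~ (i < k)%N && (i != k)) w i * U i x = c * X2 x.
  rewrite /c mulr_suml; apply: eq_bigr => i /andP[/negbTE ik /negbTE i_neq_k].
  by rewrite /U ik i_neq_k.
by rewrite /U ltnn eqxx addrA X_mix // -s_abc.
Qed.

Lemma bigmax_le_sum_subE (R : realFieldType) n (w : 'I_n -> R) :
  (forall i, 0 <= w i) ->
  (\big[Order.max/0]_(i < n) w i <= \sum_(i < n) w i - \big[Order.max/0]_(i < n) w i)
  = [forall i, 2 * w i <= \sum_(i < n) w i].
Proof.
move=> w_ge0; have s_ge0 : 0 <= \sum_(i < n) w i by exact: sumr_ge0.
apply/idP/forallP => [M_le i|w_le].
  by have := le_bigmax 0 w i; lra.
suff : \big[Order.max/0]_(i < n) w i <= (\sum_(i < n) w i) / 2 by lra.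
apply: bigmax_le => [|i _]; first by rewrite divr_ge0.
by have := w_le i; lra.
Qed.

Theorem mainTheorem8 (R : realType) (n : nat) (w : 'I_n -> R)
  (hn : (2 <= n)%N) (hw : forall i, 0 < w i) :
  (exists (d : measure_display) (T : measurableType d) (P : probability T R)
     (U : 'I_n -> {RV P >-> R}),
     (forall i, is_uniform01 (U i)) /\ is_wCM w U)
  <->
  \big[Order.max/0]_(i < n) w i
    <= \sum_(i < n) w i - \big[Order.max/0]_(i < n) w i.
Proof.
have w_ge0 i : 0 <= w i by exact: ltW.
rewrite bigmax_le_sum_subE //; split => [[d [T [P [U [U_unif U_wCM]]]]]|].
  by apply/forallP; exact: wCM_weight_le_half U_unif U_wCM.
by move/forallP; apply: wCM_exists => //; exact: ltnW.
Qed.
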